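(* Let $Q$ be a finite quiver with arrow set $Q_1$ which is connected, has no loops or $2$-cycles, in which every vertex is the source of exactly two arrows and the target of exactly two arrows, and which is equipped with bijections $f,g:Q_1\to Q_1$ such that for every $\alpha\in Q_1$, $\{f(\alpha),g(\alpha)\}$ is the set of the two arrows starting at the target of $\alpha$, and $f^3=\mathrm{id}$. For $\alpha\in Q_1$ let $\bar\alpha$ be the other arrow with the same source as $\alpha$. Write $\mathrm{PSL}_2(\mathbb{Z})=\langle x,y\mid x^2=(xy)^3=1\rangle$. Then setting $x(\alpha)=\bar\alpha$ and $y(\alpha)=g(\alpha)$ defines an action of $\mathrm{PSL}_2(\mathbb{Z})$ on $Q_1$ (in which $xy$ acts as $f$); this action is transitive, and the subgroup of elements acting trivially is normal of finite index. *)

From mathcomp Require Import all_boot.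
Set Implicit Arguments. Unset Strict Implicit. Unset Printing Implicit Defensive.

Section Quiver.
Variables (V A : finType) (src tgt : A -> V).

Definition und_adj : rel V :=
  fun u v => [exists a, ((src a == u) && (tgt a == v)) || ((src a == v) && (tgt a == u))].

Definition quiver_connected : Prop := forall u v : V, connect und_adj u v.

Definition no_loops : Prop := forall a : A, src a != tgt a.

Definition no_2cycles : Prop :=
  forall a b : A, ~ (src a = tgt b /\ tgt a = src b).

(* the other arrow with the same source as a (a itself if there is none) *)
Definition bar (a : A) : A := odflt a [pick b | (src b == src a) && (b != a)].
End Quiver.

(* Words in the generators of PSL_2(Z) = < x, y | x^2 = (xy)^3 = 1 >:
   false = x, true = y. *)
Definition letter_x := false.
Definition letter_y := true.
Definition word := seq bool.

(* the congruence on words generated by the defining relations;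
   PSL_2(Z) is the quotient of words by this congruence *)
Inductive word_eq : word -> word -> Prop :=
| we_refl w : word_eq w w
| we_sym u v : word_eq u v -> word_eq v u
| we_trans u v w : word_eq u v -> word_eq v w -> word_eq u w
| we_cat u v u' v' : word_eq u u' -> word_eq v v' -> word_eq (u ++ v) (u' ++ v')
| we_rel_x : word_eq [:: letter_x; letter_x] [::]
| we_rel_xy : word_eq [:: letter_x; letter_y; letter_x; letter_y; letter_x; letter_y] [::].

Fixpoint act_word (T : Type) (X Y : T -> T) (w : word) (a : T) : T :=
  match w with
  | [::] => a
  | l :: w' => (if l then Y else X) (act_word X Y w' a)
  end.

(* The defining relations hold on arrows because [bar] is an involution and
   [bar (g a) = f a], so [x y] acts as [f] and [(x y)^3] as [f^3 = id].  The
   orbit of an arrow contains the other arrow with the same source (via x),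
   the arrows leaving its target (via y and xy), and, the action being a group
   action, it is symmetric; hence it reaches every vertex adjacent to one it
   reaches, and by connectedness every arrow.  The kernel has finite index
   because the action factors through the finite set of maps A -> A. *)

From Stdlib Require Import Classical.
From mathcomp Require Import all_boot.

Set Implicit Arguments.
Unset Strict Implicit.
Unset Printing Implicit Defensive.

Lemma word_eq_catl u v w : word_eq v w -> word_eq (u ++ v) (u ++ w).
Proof. by move=> vw; apply: we_cat => //; apply: we_refl. Qed.

Lemma word_eq_catr u v w : word_eq u v -> word_eq (u ++ w) (v ++ w).
Proof. by move=> uv; apply: we_cat => //; apply: we_refl. Qed.

(* [y^-1 = x y x y x], read off from [(x y)^3 = 1]. *)
Definition inv_letter (l : bool) : word :=
  if l then [:: letter_x; letter_y; letter_x; letter_y; letter_x] else [:: letter_x].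

Fixpoint winv (w : word) : word :=
  if w is l :: w' then winv w' ++ inv_letter l else [::].

Lemma inv_letter_r l : word_eq (l :: inv_letter l) [::].
Proof.
case: l; last exact: we_rel_x.
apply: (@we_trans _ ([:: letter_x; letter_x] ++ letter_y :: inv_letter letter_y)).
  exact: (word_eq_catr _ (we_sym we_rel_x)).
apply: (@we_trans _ ([:: letter_x] ++ [::] ++ [:: letter_x])); last exact: we_rel_x.
exact: (word_eq_catl [:: letter_x] (word_eq_catr [:: letter_x] we_rel_xy)).
Qed.

Lemma inv_letter_l l : word_eq (inv_letter l ++ [:: l]) [::].
Proof. by case: l; [exact: we_rel_xy | exact: we_rel_x]. Qed.

Lemma winv_r w : word_eq (w ++ winv w) [::].
Proof.
elim: w => [|l w IH] /=; first exact: we_refl.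
apply: we_trans (inv_letter_r l).
rewrite catA -cat1s -catA [w ++ _]catA; exact: word_eq_catl _ (word_eq_catr _ IH).
Qed.

Lemma winv_l w : word_eq (winv w ++ w) [::].
Proof.
elim: w => [|l w IH] /=; first exact: we_refl.
apply: we_trans IH.
rewrite -catA -cat1s [inv_letter l ++ _]catA.
exact: word_eq_catl _ (word_eq_catr _ (inv_letter_l l)).
Qed.

Lemma word_eq_inv_comm u v : word_eq (u ++ v) [::] -> word_eq (v ++ u) [::].
Proof.
move=> uv; apply: we_trans (winv_r v).
apply: (@we_trans _ (v ++ (u ++ v) ++ winv v)).
  rewrite catA -{1}[v ++ u]cats0 -!catA.
  exact: word_eq_catl _ (word_eq_catl _ (we_sym (winv_r v))).
exact: word_eq_catl _ (word_eq_catr _ uv).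
Qed.

Section WordAction.
Variables (T : Type) (X Y : T -> T).
Local Notation act := (act_word X Y).

Lemma act_word_cat u v a : act (u ++ v) a = act u (act v a).
Proof. by elim: u => //= l u ->. Qed.

Lemma act_word_eq :
    involutive X -> (forall a, X (Y (X (Y (X (Y a))))) = a) ->
  forall u v, word_eq u v -> forall a, act u a = act v a.
Proof.
move=> XK XY3 u v; elim=> {u v}.
- by [].
- by move=> u v _ IH a; rewrite IH.
- by move=> u v w _ IH1 _ IH2 a; rewrite IH1 IH2.
- by move=> u v u' v' _ IH1 _ IH2 a; rewrite !act_word_cat IH1 IH2.
- by move=> a; rewrite /= XK.
- by move=> a; rewrite /= XY3.
Qed.

Definition in_orbit (a b : T) : Prop := exists w, act w a = b.

Lemma in_orbit_refl a : in_orbit a a.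
Proof. by exists [::]. Qed.

Lemma in_orbit_trans a b c : in_orbit a b -> in_orbit b c -> in_orbit a c.
Proof. by move=> [u <-] [v <-]; exists (v ++ u); rewrite act_word_cat. Qed.

Lemma in_orbit_word w a : in_orbit a (act w a).
Proof. by exists w. Qed.

Hypothesis act_wd : forall u v, word_eq u v -> forall a, act u a = act v a.

Lemma act_winvK w a : act (winv w) (act w a) = a.
Proof. by rewrite -act_word_cat (act_wd (winv_l w)). Qed.

Lemma in_orbit_sym a b : in_orbit a b -> in_orbit b a.
Proof. by move=> [w <-]; exists (winv w); rewrite act_winvK. Qed.

Lemma act_conj_trivial w w' k :
    word_eq (w' ++ w) [::] -> (forall a, act k a = a) ->
  forall a, act (w ++ k ++ w') a = a.
Proof.
move=> /word_eq_inv_comm ww' kK a.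
by rewrite !act_word_cat kK -act_word_cat (act_wd ww').
Qed.

End WordAction.

Lemma exists_fiber_reps (U : eqType) (T : finType) (h : U -> T) :
  exists s : seq U, forall u, exists2 r, r \in s & h r = h u.
Proof.
suff [s sP] : exists s : seq U, forall u, h u \in enum T -> exists2 r, r \in s & h r = h u.
  by exists s => u; apply: sP; rewrite mem_enum.
elim: (enum T) => [|t L [s sP]]; first by exists [::].
have [[u0 u0t] | no_u] := classic (exists u, h u = t).
  exists (u0 :: s) => u; rewrite inE => /orP[/eqP ut | /sP[r rs hr]].
    by exists u0; rewrite ?mem_head ?u0t.
  by exists r; rewrite // inE rs orbT.
exists s => u; rewrite inE => /orP[/eqP ut | /sP //].
by case: no_u; exists u.
Qed.

Lemma exists_coset_reps (T : finType) (X Y : T -> T) :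
    (forall u v, word_eq u v -> forall a, act_word X Y u a = act_word X Y v a) ->
  exists reps : seq word, forall w : word,
    exists2 r, r \in reps & exists k : word,
      (forall a, act_word X Y k a = a) /\ word_eq w (r ++ k).
Proof.
move=> act_wd; have [reps repsP] := exists_fiber_reps (fun w => [ffun a => act_word X Y w a]).
exists reps => w; have [r rreps /ffunP hr] := repsP w.
exists r => //; exists (winv r ++ w); split.
  by move=> a; rewrite act_word_cat -[act_word X Y w a]ffunE -hr ffunE act_winvK.
by rewrite catA; apply: we_sym (word_eq_catr _ (winv_r r)).
Qed.

Section TwoOutRegularQuiver.
Variables (V A : finType) (src tgt : A -> V).
Hypothesis out_deg2 : forall v : V, #|[set a | src a == v]| = 2.
Local Notation bar := (bar src).

Lemma bar_spec a b : (src b == src a) && (b != a) = (b == bar a).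
Proof.
have : #|[set b | src b == src a] :\ a| == 1.
  by have := out_deg2 (src a); rewrite (cardsD1 a) inE eqxx add1n => -[->].
case/cards1P=> c Sc.
have cP b' : (src b' == src a) && (b' != a) = (b' == c).
  by rewrite -[b' == c]in_set1 -Sc !inE andbC.
rewrite cP /bar; case: pickP => [c' | none]; first by rewrite cP => /eqP ->.
by move: (none c); rewrite cP eqxx.
Qed.

Lemma src_bar a : src (bar a) = src a.
Proof. by have := bar_spec a (bar a); rewrite eqxx => /andP[/eqP]. Qed.

Lemma same_src_bar a b : src b = src a -> b = a \/ b = bar a.
Proof.
move=> ba; have [-> | nba] := eqVneq b a; first by left.
by right; apply/eqP; rewrite -bar_spec ba eqxx.
Qed.

Lemma barK : involutive bar.
Proof.
move=> a; apply/esym/eqP; rewrite -bar_spec src_bar eqxx eq_sym /=.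
by have := bar_spec a (bar a); rewrite !eqxx => /andP[].
Qed.

Lemma arrow_at v : exists a, src a = v.
Proof.
have : 0 < #|[set a | src a == v]| by rewrite out_deg2.
by case/card_gt0P=> a; rewrite inE => /eqP; exists a.
Qed.

Variables f g : A -> A.
Hypothesis fg_out : forall a, [set f a; g a] = [set b | src b == tgt a].

Lemma src_f a : src (f a) = tgt a.
Proof. by have := set21 (f a) (g a); rewrite fg_out inE => /eqP. Qed.

Lemma src_g a : src (g a) = tgt a.
Proof. by have := set22 (f a) (g a); rewrite fg_out inE => /eqP. Qed.

Lemma bar_g a : bar (g a) = f a.
Proof.
apply/esym/eqP; rewrite -bar_spec src_f src_g eqxx /=.
apply/eqP=> fg; have := out_deg2 (tgt a).
by rewrite -fg_out fg setUid cards1.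
Qed.

Local Notation act := (act_word bar g).

Lemma act_xy a : act [:: letter_x; letter_y] a = f a.
Proof. exact: bar_g. Qed.

Hypothesis f3 : forall a, f (f (f a)) = a.

Lemma act_wd u v : word_eq u v -> forall a, act u a = act v a.
Proof. by apply: act_word_eq; [exact: barK | move=> a; rewrite !bar_g]. Qed.

Local Notation in_orbit := (in_orbit bar g).

Lemma in_orbit_same_src a b : src b = src a -> in_orbit a b.
Proof.
case/same_src_bar=> ->; first exact: in_orbit_refl.
exact: (in_orbit_word _ _ [:: letter_x]).
Qed.

Lemma in_orbit_adj c d : und_adj src tgt (src c) (src d) -> in_orbit c d.
Proof.
case/existsP=> e /orP[/andP[/eqP ec /eqP ed] | /andP[/eqP ed /eqP ec]].
  apply: in_orbit_trans (in_orbit_same_src ec) _.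
  apply: in_orbit_trans (in_orbit_word _ _ [:: letter_y] e) _.
  by apply: in_orbit_same_src; rewrite /= src_g.
have ce : in_orbit c (f e) by apply: in_orbit_same_src; rewrite src_f.
have fe : in_orbit (f e) e.
  by apply: (in_orbit_sym act_wd); rewrite -act_xy; apply: in_orbit_word.
exact: in_orbit_trans (in_orbit_trans ce fe) (in_orbit_same_src (esym ed)).
Qed.

Lemma in_orbit_connect a b :
  connect (und_adj src tgt) (src a) (src b) -> in_orbit a b.
Proof.
case/connectP=> p; elim: p a => [|v p IH] a /=; first by move=> _ /in_orbit_same_src.
case/andP=> av pv last_b; have [d dv] := arrow_at v; subst v.
exact: in_orbit_trans (in_orbit_adj av) (IH d pv last_b).
Qed.

End TwoOutRegularQuiver.

Theorem proposition3p3 (V A : finType) (src tgt : A -> V) (f g : A -> A) :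
  quiver_connected src tgt ->
  no_loops src tgt ->
  no_2cycles src tgt ->
  (forall v : V, #|[set a | src a == v]| = 2) ->
  (forall v : V, #|[set a | tgt a == v]| = 2) ->
  bijective f -> bijective g ->
  (forall a : A, [set f a; g a] = [set b | src b == tgt a]) ->
  (forall a : A, f (f (f a)) = a) ->
  let act := act_word (bar src) g in
  (* the action is well defined on PSL_2(Z) *)
  (forall u v : word, word_eq u v -> forall a, act u a = act v a) /\
  (forall a, act [:: letter_x; letter_y] a = f a) /\
  (forall a b : A, exists w : word, act w a = b) /\
  (* the kernel K = {w | w acts trivially} is normal ... *)
  (forall w w' k : word, word_eq (w' ++ w) [::] ->
     (forall a, act k a = a) -> forall a, act (w ++ k ++ w') a = a) /\
  (* ... and of finite index: finitely many left cosets r K cover PSL_2(Z) *)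
  (exists reps : seq word, forall w : word,
     exists2 r, r \in reps & exists k : word, (forall a, act k a = a) /\ word_eq w (r ++ k)).
Proof.
move=> conn _ _ out_deg2 _ _ _ fg_out f3 act.
have wd := act_wd out_deg2 fg_out f3.
split; first exact: wd.
split; first by move=> a; apply: act_xy.
split; first by move=> a b; apply: (in_orbit_connect out_deg2 fg_out f3 (conn _ _)).
split; first exact: act_conj_trivial wd.
exact: exists_coset_reps wd.
Qed.
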